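(* For all $r,s\ge1$, as an identity of polynomials in $q$, $$\sum_C(q-1)^{|S(C)|-l(C)}(-1)^{|S(C)|}=q^{\min(r,s)},$$ where the sum runs over all cells $C$ for $(r,s)$, including the empty cell.
   Context: A cell (for given $r,s$) is a finite (possibly empty) sequence of distinct pairs $(i_1,j_1),\dots,(i_l,j_l)$ with $1\le i_k\le r$, $1\le j_k\le s$, $i_1\le\cdots\le i_l$ and $j_1\le\cdots\le j_l$; $l(C)=l$ and $|S(C)|=|\{i_1,\dots,i_l\}|+|\{j_1,\dots,j_l\}|$ (so the empty cell has $l=|S|=0$). *)

From HB Require Import structures.
From mathcomp Require Import all_boot all_order all_algebra.
Set Implicit Arguments. Unset Strict Implicit. Unset Printing Implicit Defensive.
Import Order.TTheory GRing.Theory Num.Theory.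

(* A cell for (r,s): a finite sequence of distinct pairs (i_k, j_k), with
   i_k ranging over 'I_r (i.e. {0..r-1}, shifted from {1..r}) and j_k over 'I_s,
   such that i_1 <= ... <= i_l and j_1 <= ... <= j_l. *)
Definition is_cell (r s : nat) (C : seq ('I_r * 'I_s)) : bool :=
  [&& uniq C,
      sorted leq [seq nat_of_ord p.1 | p <- C] &
      sorted leq [seq nat_of_ord p.2 | p <- C]].

Definition cell_l (r s : nat) (C : seq ('I_r * 'I_s)) : nat := size C.

Definition cell_S (r s : nat) (C : seq ('I_r * 'I_s)) : nat :=
  size (undup [seq p.1 | p <- C]) + size (undup [seq p.2 | p <- C]).

(* A cell consists of distinct pairs from a set of
   size r*s, so its length is at most r*s; we enumerate all sequences of each
   length l <= r*s and keep those that are cells. *)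
Definition sum_cells (R : nmodType) (r s : nat) (F : seq ('I_r * 'I_s) -> R) : R :=
  (\sum_(l < (r * s).+1) \sum_(t : l.-tuple ('I_r * 'I_s) | is_cell (tval t)) F (tval t))%R.

From HB Require Import structures.
From mathcomp Require Import all_boot all_order all_algebra.
From mathcomp Require Import zify ring.
Import GRing.Theory.
Local Open Scope ring_scope.

(* A nonempty cell is a chain x_1 < ... < x_l in the product order of the
   grid, and its weight factors as (X - 1) times one factor per step: X - 1
   for a step that moves both coordinates, -1 for a step that moves only one.
   Hence the total weight E x of the cells starting at x satisfies
   E x = (X - 1) + \sum_(x < y) step x y * E y, and by induction on the
   distance to the corner E x = (X - 1) X^(k-1) when x lies on the diagonal
   ending in the corner (r, s) at distance k from it, and E x = 0 otherwise.
   Summing over the grid leaves the geometric sum X^(min r s) - 1, and the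
   empty cell contributes the remaining 1. *)

Lemma big_tuple_cons (R : nmodType) (T : finType) n (P : seq T -> bool)
    (F : seq T -> R) :
  \sum_(t : n.+1.-tuple T | P t) F t =
  \sum_(x : T) \sum_(t : n.-tuple T | P (x :: t)) F (x :: t).
Proof.
rewrite pair_big_dep /=.
rewrite (reindex (fun p : T * n.-tuple T => cons_tuple p.1 p.2)) //=.
exists (fun t : n.+1.-tuple T => (thead t, [tuple of behead t])).
  by move=> [x t] _ /=; congr pair; apply: val_inj.
by move=> t _; rewrite [in RHS](tuple_eta t).
Qed.

Lemma sum_ord_eq_subn (R : nmodType) (s k : nat) (h : nat -> R) : (0 < k)%N ->
  \sum_(j < s) (if (k == s - j)%N then h j else 0) =
  if (k <= s)%N then h (s - k)%N else 0.
Proof.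
move=> k_gt0; case: leqP => [k_le_s | s_lt_k].
  have sk_lt_s : (s - k < s)%N by lia.
  rewrite (bigD1 (Ordinal sk_lt_s)) //= ifT; last by apply/eqP; lia.
  rewrite big1 ?addr0 // => j /negbTE; rewrite -val_eqE /= => j_neq.
  by case: eqP => // ?; move/eqP: j_neq; have := ltn_ord j; lia.
by rewrite big1 // => j _; case: eqP => // ?; have := ltn_ord j; lia.
Qed.

Lemma sum_corner_diagonal (R : nmodType) (r s : nat) (G : nat -> nat -> R) :
  \sum_(i < r) \sum_(j < s) (if (r - i == s - j)%N then G i j else 0) =
  \sum_(k < minn r s) G (r - k.+1)%N (s - k.+1)%N.
Proof.
rewrite (eq_bigr (fun i : 'I_r => if (r - i <= s)%N then G i (s - (r - i))%N else 0));
  last by move=> i _; rewrite sum_ord_eq_subn // subn_gt0.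
rewrite -(big_mkord xpredT (fun i => if (r - i <= s)%N then G i (s - (r - i))%N else 0)).
rewrite big_rev_mkord subn0.
rewrite [RHS](big_ord_widen r (fun k => G (r - k.+1)%N (s - k.+1)%N) (geq_minl r s)).
rewrite [RHS]big_mkcond.
apply: eq_bigr => k _; have k_lt_r := ltn_ord k.
rewrite (_ : (r - (r - k.+1) = k.+1)%N); last by lia.
by rewrite (_ : (k.+1 <= s)%N = (k < minn r s)%N) //; lia.
Qed.

Definition diag_weight (k : nat) : {poly int} := ('X - 1) * 'X^k.

Lemma sum_diag_weight k : \sum_(i < k) diag_weight i = 'X^k - 1.
Proof.
elim: k => [|k IH]; first by rewrite big_ord0 expr0 subrr.
by rewrite big_ord_recr /= IH /diag_weight exprS; ring.
Qed.

(* The term of [\sum_(x < y) step_weight x y * cells_from_closed y] at the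
   diagonal point y at distance k.+1 from the corner, where m, n are the
   distances of x to the corner: y lies above x iff k.+1 <= min m n and y != x,
   and the step from x to y moves both coordinates iff k.+1 < min m n. *)
Definition diag_step_term (m n k : nat) : {poly int} :=
  if (k.+1 < minn m n)%N then ('X - 1) * diag_weight k
  else if m == n then 0 else - diag_weight k.

Lemma sum_diag_step_term (m n : nat) : (0 < m)%N -> (0 < n)%N ->
  \sum_(k < minn m n) diag_step_term m n k =
  (if m == n then diag_weight m.-1 else 0) - ('X - 1).
Proof.
move=> m_gt0 n_gt0; have [p def_p] : exists p, minn m n = p.+1.
  by exists (minn m n).-1; lia.
rewrite def_p big_ord_recr /= /diag_step_term def_p ltnn.
rewrite (eq_bigr (fun k : 'I_p => ('X - 1) * diag_weight k)); last first.
  by move=> k _; rewrite ifT // ltnS ltn_ord.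
rewrite -mulr_sumr sum_diag_weight.
case: eqP => [eq_mn | _]; last by rewrite /diag_weight; ring.
by rewrite (_ : m.-1 = p); [rewrite /diag_weight; ring | lia].
Qed.

Section Cells.
Set Implicit Arguments.
Unset Strict Implicit.
Variables r s : nat.
Local Notation T := ('I_r * 'I_s)%type.

Definition cell_lt (x y : T) : bool :=
  [&& (x.1 <= y.1)%N, (x.2 <= y.2)%N & x != y].

Lemma pair_ord_eqE (x y : T) :
  (x == y) = ((x.1 : nat) == y.1) && ((x.2 : nat) == y.2).
Proof. by case: x y => [x1 x2] [y1 y2]; rewrite xpair_eqE. Qed.

Lemma cell_lt_sum (x y : T) : cell_lt x y -> (x.1 + x.2 < y.1 + y.2)%N.
Proof. by case/and3P=> le1 le2; rewrite pair_ord_eqE; lia. Qed.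

Lemma is_cell_cons (x : T) t :
  is_cell (x :: t) = is_cell t && (if t is y :: _ then cell_lt x y else true).
Proof.
case: t => [|y t] //=; rewrite /is_cell /= /cell_lt inE negb_or.
apply/idP/idP.
  move=> /and4P[/and3P[/andP[xy xt] yt u] /andP[le1 s1] le2 s2].
  by rewrite yt u s1 s2 le1 le2 xy.
move=> /andP[/and3P[/andP[yt u] s1 s2] /and3P[le1 le2 xy]].
rewrite xy yt u le1 s1 le2 s2 /= !andbT; apply/negP=> x_in_t.
have /allP/(_ _ (map_f (fun p : T => nat_of_ord p.1) x_in_t)) :=
  order_path_min leq_trans s1.
have /allP/(_ _ (map_f (fun p : T => nat_of_ord p.2) x_in_t)) :=
  order_path_min leq_trans s2.
by move: xy; rewrite pair_ord_eqE /=; lia.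
Qed.

Lemma is_cell_cons2 (x y : T) t : is_cell (x :: y :: t) ->
  [/\ is_cell (y :: t), cell_lt x y,
      all (leq y.1) [seq nat_of_ord p.1 | p <- t]
    & all (leq y.2) [seq nat_of_ord p.2 | p <- t]].
Proof.
rewrite is_cell_cons => /andP[yt xy]; split => //.
  by case/and3P: yt => _ /(order_path_min leq_trans).
by case/and3P: yt => _ _ /(order_path_min leq_trans).
Qed.

(* A new head can only repeat the coordinates of the old head, as the later
   entries are at least as large. *)
Lemma cell_S_cons2 (x y : T) t : is_cell (x :: y :: t) ->
  cell_S (x :: y :: t) =
  (cell_S (y :: t) + ((x.1 : nat) != y.1) + ((x.2 : nat) != y.2))%N.
Proof.
move=> /is_cell_cons2 [_ /and3P[le1 le2 _] ge1 ge2].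
have mem1 : (x.1 \in [seq p.1 | p <- y :: t]) = ((x.1 : nat) == y.1).
  rewrite /= inE -val_eqE /=; case: eqP => //= ne1.
  apply/negP => /mapP [z zt eq_z].
  have /allP/(_ _ (map_f (fun p : T => nat_of_ord p.1) zt)) := ge1.
  by rewrite -eq_z; lia.
have mem2 : (x.2 \in [seq p.2 | p <- y :: t]) = ((x.2 : nat) == y.2).
  rewrite /= inE -val_eqE /=; case: eqP => //= ne2.
  apply/negP => /mapP [z zt eq_z].
  have /allP/(_ _ (map_f (fun p : T => nat_of_ord p.2) zt)) := ge2.
  by rewrite -eq_z; lia.
rewrite /cell_S [map _ (x :: _)]/= [map (fun p : T => p.2) (x :: _)]/=.
rewrite [undup (x.1 :: _)]/= [undup (x.2 :: _)]/= mem1 mem2.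
by case: eqP; case: eqP => /= _ _; lia.
Qed.

Lemma cell_l_le_S (C : seq T) : is_cell C -> (cell_l C <= cell_S C)%N.
Proof.
elim: C => [|x [|y t] IH] //= xyt.
have [/IH + /and3P[_ _ + ] _ _] := is_cell_cons2 xyt.
by rewrite (cell_S_cons2 xyt) pair_ord_eqE /cell_l /=; lia.
Qed.

Definition cell_weight (C : seq T) : {poly int} :=
  ('X - 1) ^+ (cell_S C - cell_l C) * (-1) ^+ cell_S C.

Definition step_weight (x y : T) : {poly int} :=
  if (x.1 < y.1)%N && (x.2 < y.2)%N then 'X - 1 else -1.

Lemma cell_weight1 (x : T) : cell_weight [:: x] = 'X - 1.
Proof. by rewrite /cell_weight /cell_S /cell_l /= expr1 expr2; ring. Qed.

Lemma cell_weight_cons2 (x y : T) t : is_cell (x :: y :: t) ->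
  cell_weight (x :: y :: t) = step_weight x y * cell_weight (y :: t).
Proof.
move=> xyt; have [/cell_l_le_S + /and3P[le1 le2 +] _ _] := is_cell_cons2 xyt.
rewrite /cell_weight (cell_S_cons2 xyt) /step_weight /cell_l /= pair_ord_eqE.
set S := cell_S (y :: t); set l := size t => l_lt_S.
case: eqP => eq1; case: eqP => eq2 //= _.
- rewrite ifF; last by lia.
  rewrite (_ : (S + 0 + 1 - l.+2 = S - l.+1)%N) ?addn0 ?addn1 ?exprS; [ring | lia].
- rewrite ifF; last by lia.
  rewrite (_ : (S + 1 + 0 - l.+2 = S - l.+1)%N) ?addn0 ?addn1 ?exprS; [ring | lia].
- rewrite ifT; last by lia.
  rewrite (_ : (S + 1 + 1 - l.+2 = (S - l.+1).+1)%N) ?addn1 ?exprS; [ring | lia].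
Qed.

Definition cells_from_len (l : nat) (x : T) : {poly int} :=
  \sum_(t : l.-tuple T | is_cell (x :: t)) cell_weight (x :: t).

Lemma cells_from_len0 (x : T) : cells_from_len 0 x = 'X - 1.
Proof.
rewrite /cells_from_len (big_pred1 [tuple]) ?cell_weight1 // => t.
by rewrite (tuple0 t) /= eqxx /is_cell /=.
Qed.

Lemma cells_from_lenS l (x : T) :
  cells_from_len l.+1 x = \sum_(y | cell_lt x y) step_weight x y * cells_from_len l y.
Proof.
rewrite /cells_from_len.
rewrite (big_tuple_cons _ _ _ (fun t => is_cell (x :: t))
                        (fun t => cell_weight (x :: t))).
rewrite [RHS]big_mkcond; apply: eq_bigr => y _; case: ifP => xy.
  rewrite mulr_sumr; apply: eq_big => t; first by rewrite is_cell_cons /= xy andbT.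
  exact: cell_weight_cons2.
by apply: big_pred0 => t; rewrite is_cell_cons /= xy andbF.
Qed.

(* Each step raises i + j, so a cell of length l + 1 starting at x needs
   x.1 + x.2 + l <= (r - 1) + (s - 1). *)
Lemma cells_from_len_long l (x : T) :
  (r + s < x.1 + x.2 + l + 2)%N -> cells_from_len l x = 0.
Proof.
elim: l x => [|l IH] x long.
  by have := ltn_ord x.1; have := ltn_ord x.2; lia.
rewrite cells_from_lenS big1 // => y xy.
by rewrite IH ?mulr0 //; have := cell_lt_sum xy; lia.
Qed.

Definition max_cell_len := (r + s).-1.

Lemma sum_cells_from_len_widen M (x : T) : (max_cell_len <= M)%N ->
  \sum_(l < M) cells_from_len l x = \sum_(l < max_cell_len) cells_from_len l x.
Proof.
move=> le_M; rewrite -!(big_mkord xpredT (cells_from_len^~ x)).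
rewrite (big_cat_nat (leq0n _) le_M) /= [X in _ + X]big_nat_cond.
rewrite [X in _ + X]big1 ?addr0 // => l /andP[/andP[long _] _].
by apply: cells_from_len_long; move: long; rewrite /max_cell_len; lia.
Qed.

Definition cells_from (x : T) : {poly int} :=
  \sum_(l < max_cell_len) cells_from_len l x.

Lemma cells_from_rec (x : T) :
  cells_from x = ('X - 1) + \sum_(y | cell_lt x y) step_weight x y * cells_from y.
Proof.
rewrite /cells_from -(sum_cells_from_len_widen x (leqnSn _)).
rewrite big_ord_recl cells_from_len0; congr (_ + _).
under eq_bigr do rewrite lift0 cells_from_lenS.
by rewrite exchange_big; apply: eq_bigr => y _; rewrite mulr_sumr.
Qed.

Definition cells_from_closed (x : T) : {poly int} :=
  if (r - x.1 == s - x.2)%N then diag_weight (r - x.1.+1) else 0.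

Lemma cells_from_closed_rec (x : T) :
  ('X - 1) + \sum_(y | cell_lt x y) step_weight x y * cells_from_closed y =
  cells_from_closed x.
Proof.
have x1_lt := ltn_ord x.1; have x2_lt := ltn_ord x.2.
set m := (r - x.1)%N; set n := (s - x.2)%N.
pose G i j : {poly int} :=
  if [&& (x.1 <= i)%N, (x.2 <= j)%N & ~~ (((x.1 : nat) == i) && ((x.2 : nat) == j))]
  then (if (x.1 < i)%N && (x.2 < j)%N then 'X - 1 else -1) * diag_weight (r - i.+1)
  else 0.
have -> : \sum_(y | cell_lt x y) step_weight x y * cells_from_closed y =
    \sum_(i < r) \sum_(j < s) (if (r - i == s - j)%N then G i j else 0).
  rewrite pair_big big_mkcond; apply: eq_bigr => -[i j] _.
  rewrite /cell_lt pair_ord_eqE /step_weight /cells_from_closed /G /=.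
  by repeat case: ifP => _; rewrite ?mulr0.
rewrite sum_corner_diagonal.
have le_mn : (minn m n <= minn r s)%N by lia.
have -> : \sum_(k < minn r s) G (r - k.+1)%N (s - k.+1)%N =
    \sum_(k < minn m n) diag_step_term m n k.
  rewrite (big_ord_widen _ (diag_step_term m n) le_mn) [RHS]big_mkcond.
  apply: eq_bigr => k _; have k_lt := ltn_ord k.
  rewrite /G /diag_step_term (_ : (r - (r - k.+1).+1)%N = k); last by lia.
  rewrite /m /n; repeat case: ifP => ?; rewrite ?mulN1r //; lia.
rewrite sum_diag_step_term; [|lia..].
rewrite /cells_from_closed -/m -/n (_ : m.-1 = r - x.1.+1)%N; [ring | lia].
Qed.

Lemma cells_from_eq_closed (x : T) : cells_from x = cells_from_closed x.
Proof.
have [d] := ubnP (r - x.1 + (s - x.2)); elim: d x => // d IH x dist_x.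
rewrite cells_from_rec -cells_from_closed_rec; congr (_ + _).
apply: eq_bigr => y /cell_lt_sum lt_sum; rewrite IH //.
move: x y dist_x lt_sum => [x1 x2] [y1 y2] /=.
by have := ltn_ord y1; have := ltn_ord y2; lia.
Qed.

Lemma sum_cells_from_closed :
  \sum_(x : T) cells_from_closed x = 'X^(minn r s) - 1.
Proof.
rewrite -(pair_big xpredT xpredT (fun i j => cells_from_closed (i, j))) /=.
rewrite /cells_from_closed /=.
rewrite (sum_corner_diagonal _ _ _ (fun i _ => diag_weight (r - i.+1))) -sum_diag_weight.
apply: eq_bigr => k _.
by rewrite (_ : (r - (r - k.+1).+1)%N = k) //; have := ltn_ord k; lia.
Qed.

Lemma sum_cells_head : (0 < r)%N -> (0 < s)%N ->
  sum_cells cell_weight = 1 + \sum_(x : T) cells_from x.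
Proof.
move=> r_gt0 s_gt0; rewrite /sum_cells big_ord_recl.
rewrite (big_pred1 [tuple]); last by move=> t; rewrite (tuple0 t) /= eqxx.
rewrite /cell_weight expr0 mulr1; congr (_ + _).
under eq_bigr do rewrite (big_tuple_cons _ _ _ (@is_cell r s) cell_weight).
rewrite exchange_big; apply: eq_bigr => x _.
by rewrite sum_cells_from_len_widen // /max_cell_len; nia.
Qed.

End Cells.

Theorem mainTheorem14 (r s : nat) (hr : (1 <= r)%N) (hs : (1 <= s)%N) :
  sum_cells (fun C : seq ('I_r * 'I_s) =>
      ('X - 1 : {poly int}) ^+ (cell_S C - cell_l C)%N * (-1) ^+ cell_S C)
  = 'X ^+ minn r s.
Proof.
rewrite (sum_cells_head hr hs).
under eq_bigr do rewrite cells_from_eq_closed.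
by rewrite sum_cells_from_closed addrC subrK.
Qed.
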